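(* Let $\Phi_o$ be a $\mathrm{Spin}(7)$-structure on an oriented $8$-manifold with metric $g_o$, let $v,w$ be vector fields, and let $\sigma_7 = v^\flat\wedge(w\lrcorner\Phi_o) - w^\flat\wedge(v\lrcorner\Phi_o)$, $\tilde\Phi = \Phi_o + \sigma_7$. Then \[ \tilde\Phi\wedge\tilde\Phi = \left(1+\tfrac47|v\wedge w|_o^2\right)\Phi_o\wedge\Phi_o . \]
   Context: A $\mathrm{Spin}(7)$-structure on an oriented $8$-manifold $M$ is a $4$-form $\Phi$ such that at each point $p$ there are local coordinates $x^0,\dots,x^7$ with $\Phi_p = dx^{0123} - dx^{0167} - dx^{0527} - dx^{0563} + dx^{0415} + dx^{0426} + dx^{0437} + dx^{4567} - dx^{4523} - dx^{4163} - dx^{4127} + dx^{2637} + dx^{1537} + dx^{1526}$. It determines a Riemannian metric (equal to $\sum_k dx^k\otimes dx^k$ at $p$), orientation, volume form and Hodge star; $\Phi\wedge\Phi=14\,\mathrm{vol}$. $v^\flat=g_o(v,\cdot)$, and $|v\wedge w|_o^2 = |v|_o^2|w|_o^2 - g_o(v,w)^2$. *)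

(* Pointwise linear algebra of the exterior algebra of R^8,
   written in a Spin(7)-adapted coframe dx^0..dx^7 at a point. *)
From HB Require Import structures.
From mathcomp Require Import all_boot all_order all_algebra.
Set Implicit Arguments. Unset Strict Implicit. Unset Printing Implicit Defensive.
Import Order.TTheory GRing.Theory Num.Theory.
Local Open Scope ring_scope.

(* An element of the exterior algebra Λ(R^8)^*: the coefficient of
   dx^I = dx^{i1} ∧ ... ∧ dx^{ik} (i1 < ... < ik) for every subset I. *)
Notation form R := {ffun {set 'I_8} -> R^o}.

Section Ext.
Variable R : realFieldType.

Definition inv_count (I J : {set 'I_8}) : nat :=
  #|[set p : 'I_8 * 'I_8 | [&& p.1 \in I, p.2 \in J & (p.2 < p.1)%N]]|.

(* dx^I ∧ dx^J = (-1)^{inv_count I J} dx^{I ∪ J} for disjoint I, J *)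
Definition wedge (a b : form R) : form R :=
  [ffun K : {set 'I_8} => \sum_(I : {set 'I_8} | I \subset K)
               (-1) ^+ inv_count I (K :\: I) * a I * b (K :\: I)].

Definition dx (i : 'I_8) : form R := [ffun K : {set 'I_8} => if K == [set i] then 1 else 0].

Definition contr (v : 'rV[R]_8) (a : form R) : form R :=
  [ffun I : {set 'I_8} => \sum_(j : 'I_8 | j \notin I)
               (-1) ^+ #|[set i in I | (i < j)%N]| * v 0 j * a (j |: I)].

(* Euclidean metric g_o in the adapted coframe *)
Definition dot (u v : 'rV[R]_8) : R := \sum_i u 0 i * v 0 i.

Definition flat (v : 'rV[R]_8) : form R := \sum_j v 0 j *: dx j.

Definition wedge_norm2 (v w : 'rV[R]_8) : R :=
  dot v v * dot w w - (dot v w) ^+ 2.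

Definition dx4 (a b c d : nat) : form R :=
  wedge (dx (inord a)) (wedge (dx (inord b)) (wedge (dx (inord c)) (dx (inord d)))).

Definition Phi0 : form R :=
  dx4 0 1 2 3 - dx4 0 1 6 7 - dx4 0 5 2 7 - dx4 0 5 6 3
  + dx4 0 4 1 5 + dx4 0 4 2 6 + dx4 0 4 3 7 + dx4 4 5 6 7
  - dx4 4 5 2 3 - dx4 4 1 6 3 - dx4 4 1 2 7
  + dx4 2 6 3 7 + dx4 1 5 3 7 + dx4 1 5 2 6.

End Ext.

From Stdlib Require Import ZArith Ring_theory Ring_polynom.
From HB Require Import structures.
From mathcomp Require Import all_boot all_order all_algebra ring.
From mathcomp.zify Require Import ssrZ.
From mathcomp.algebra_tactics Require Import common.
Set Implicit Arguments. Unset Strict Implicit. Unset Printing Implicit Defensive.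
Import Order.TTheory GRing.Theory Num.Theory.
Local Open Scope ring_scope.

(* Both sides are polynomials of degree at most 4 in the 16 coordinates of v
   and w, so the theorem is an identity in the exterior algebra over
   Z[v_0, ..., v_7, w_0, ..., w_7].  We compute in that algebra: a form is a
   list of monomials, wedge products and contractions act on monomials by
   dx^A ∧ dx^B = (-1)^inv(A,B) dx^(A ∪ B) and by signed deletion, and after
   collecting coefficients 7 Φ̃∧Φ̃ and (7 + 4|v∧w|²) Φ∧Φ agree coefficientwise
   as normalised integer polynomials.  Evaluating the variables at the actual
   coordinates commutes with every operation, which transports the identity
   to any real field. *)

Lemma regular_scaleE (R : pzSemiRingType) (c x : R) : c *: (x : R^o) = c * x.
Proof. by []. Qed.

Section ExteriorAlgebra.
Variable R : realFieldType.
Implicit Types (a b : form R) (v : 'rV[R]_8) (A B I K S : {set 'I_8}).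

Definition dxI S : form R := [ffun K => if K == S then 1 else 0].

Lemma wedge0l b : wedge 0 b = 0.
Proof.
by apply/ffunP => K; rewrite !ffunE big1 // => I _; rewrite ffunE mulr0 mul0r.
Qed.

Lemma wedge0r a : wedge a 0 = 0.
Proof. by apply/ffunP => K; rewrite !ffunE big1 // => I _; rewrite ffunE mulr0. Qed.

Lemma wedgeDl a1 a2 b : wedge (a1 + a2) b = wedge a1 b + wedge a2 b.
Proof.
apply/ffunP => K; rewrite !ffunE -big_split.
by apply: eq_bigr => I _; rewrite ffunE mulrDr mulrDl.
Qed.

Lemma wedgeDr a b1 b2 : wedge a (b1 + b2) = wedge a b1 + wedge a b2.
Proof.
apply/ffunP => K; rewrite !ffunE -big_split.
by apply: eq_bigr => I _; rewrite ffunE mulrDr.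
Qed.

Lemma wedgeZl c a b : wedge (c *: a) b = c *: wedge a b.
Proof.
apply/ffunP => K; rewrite !ffunE scaler_sumr; apply: eq_bigr => I _.
by rewrite ffunE !regular_scaleE mulrCA !mulrA.
Qed.

Lemma wedgeZr c a b : wedge a (c *: b) = c *: wedge a b.
Proof.
apply/ffunP => K; rewrite !ffunE scaler_sumr; apply: eq_bigr => I _.
by rewrite ffunE !regular_scaleE mulrCA.
Qed.

Lemma wedge_suml (T : Type) (r : seq T) (F : T -> form R) b :
  wedge (\sum_(i <- r) F i) b = \sum_(i <- r) wedge (F i) b.
Proof.
exact: (big_morph (fun a => wedge a b) (fun a1 a2 => wedgeDl a1 a2 b) (wedge0l b)).
Qed.

Lemma wedge_sumr (T : Type) (r : seq T) a (F : T -> form R) :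
  wedge a (\sum_(i <- r) F i) = \sum_(i <- r) wedge a (F i).
Proof. exact: (big_morph (wedge a) (wedgeDr a) (wedge0r a)). Qed.

Lemma subset_setD_eq A B K :
  (A \subset K) && (K :\: A == B) = [disjoint A & B] && (K == A :|: B).
Proof.
apply/andP/andP => [[/subsetP AK /eqP <-] | [dAB /eqP ->]]; split.
- rewrite -setI_eq0; apply/eqP/setP => i.
  by rewrite !inE; case: (i \in A); rewrite ?andbF.
- by apply/eqP/setP => i; rewrite !inE; case: (boolP (i \in A)) => // /AK.
- exact: subsetUl.
- by rewrite setDUl setDv set0U; apply/eqP/setDidPl; rewrite disjoint_sym.
Qed.

Lemma wedge_dxI A B :
  wedge (dxI A) (dxI B) =
  if [disjoint A & B] then (-1) ^+ inv_count A B *: dxI (A :|: B) else 0.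
Proof.
apply/ffunP => K; rewrite !ffunE.
have -> : \sum_(I : {set 'I_8} | I \subset K)
            (-1) ^+ inv_count I (K :\: I) * dxI A I * dxI B (K :\: I)
          = if (A \subset K) && (K :\: A == B) then (-1) ^+ inv_count A B else 0.
  rewrite big_mkcond (bigD1 A) //= big1 => [|I nIA]; last first.
    by rewrite !ffunE (negbTE nIA) mulr0 mul0r if_same.
  rewrite !ffunE eqxx addr0 mulr1; case: (A \subset K) => //=.
  by case: eqP => [->|_]; rewrite ?mulr1 ?mulr0.
rewrite subset_setD_eq; case: (boolP [disjoint A & B]) => _ /=; last by rewrite ffunE.
by rewrite !ffunE regular_scaleE; case: eqP; rewrite ?mulr1 ?mulr0.
Qed.

Lemma contrD v a1 a2 : contr v (a1 + a2) = contr v a1 + contr v a2.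
Proof.
apply/ffunP => I; rewrite !ffunE -big_split.
by apply: eq_bigr => j _; rewrite ffunE mulrDr.
Qed.

Lemma contrZ v c a : contr v (c *: a) = c *: contr v a.
Proof.
apply/ffunP => I; rewrite !ffunE scaler_sumr; apply: eq_bigr => j _.
by rewrite ffunE !regular_scaleE mulrCA.
Qed.

Lemma contr0 v : contr v 0 = 0.
Proof. by apply/ffunP => I; rewrite !ffunE big1 // => j _; rewrite ffunE mulr0. Qed.

Lemma contr_sum (T : Type) (r : seq T) v (F : T -> form R) :
  contr v (\sum_(i <- r) F i) = \sum_(i <- r) contr v (F i).
Proof. exact: (big_morph (contr v) (contrD v) (contr0 v)). Qed.

Lemma setU1_eq_setD1 (j : 'I_8) I S :
  (j \notin I) && (j |: I == S) = (j \in S) && (I == S :\ j).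
Proof.
apply/andP/andP => [[jI /eqP <-] | [jS /eqP ->]]; split.
- exact: setU11.
- by rewrite setU1K.
- by rewrite setD11.
- by rewrite setD1K.
Qed.

Lemma contr_dxI v S :
  contr v (dxI S) =
  \sum_(j in S) ((-1) ^+ #|[set i in S | (i < j)%N]| * v 0 j) *: dxI (S :\ j).
Proof.
apply/ffunP => I; rewrite !ffunE sum_ffunE big_mkcond [RHS]big_mkcond.
apply: eq_bigr => j _; rewrite !ffunE regular_scaleE.
have := setU1_eq_setD1 j I S.
case: (j \in I) (j \in S) (j |: I =P S) (I =P S :\ j) => [] [] [_|_] [->|_] //= _.
all: rewrite ?mulr1 ?mulr0 //.
suff -> : [set i in S :\ j | (i < j)%N] = [set i in S | (i < j)%N] by [].
apply/setP => i; rewrite !inE -andbA; case: (ltnP i j) => ij; rewrite ?andbF //.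
by rewrite -val_eqE (ltn_eqF ij).
Qed.

End ExteriorAlgebra.

Arguments dxI {R} S.

Notation zpoly := (Pol Z).

Definition padd : zpoly -> zpoly -> zpoly := Padd Z0 Z.add Zeq_bool.
Definition pmul : zpoly -> zpoly -> zpoly := Pmul Z0 (Zpos 1) Z.add Z.mul Zeq_bool.
Definition popp : zpoly -> zpoly := Popp Z.opp.
Definition peqb : zpoly -> zpoly -> bool := Peq Zeq_bool.
Definition psign (n : nat) (p : zpoly) : zpoly := if odd n then popp p else p.
Definition pvar (k : nat) : zpoly := mk_X Z0 (Zpos 1) (Pos.of_succ_nat k).
Definition psum (s : seq zpoly) : zpoly := foldr padd (Pc Z0) s.

Lemma BinList_nth_succ (T : Type) (d : T) p (l : seq T) :
  BinList.nth d (Pos.succ p) l = BinList.nth d p (List.tl l).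
Proof.
elim: p l => [p IHp | p _ | ] l //=.
by rewrite IHp BinList.jump_succ /= !BinList.jump_tl.
Qed.

Lemma BinList_nth_of_succ_nat (T : Type) (d : T) k (l : seq T) :
  BinList.nth d (Pos.of_succ_nat k) l = nth d l k.
Proof.
elim: k l => [|k IHk] [|x l] //=; rewrite BinList_nth_succ IHk //.
by case: k {IHk}.
Qed.

Section PolyEval.
Variables (R : comPzRingType) (env : seq R).

Definition peval (p : zpoly) : R := Pphi 0 +%R *%R (fun z => (int_of_Z z)%:~R) env p.

Let Rsth := Eqsth R.
Let Reqe := Eq_ext +%R *%R (@GRing.opp R).
Let ARth := Rth_ARth Rsth Reqe (RR R).

Lemma peval_add p q : peval (padd p q) = peval p + peval q.
Proof. exact: (Padd_ok Rsth Reqe ARth (RZ R)). Qed.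

Lemma peval_mul p q : peval (pmul p q) = peval p * peval q.
Proof. exact: (Pmul_ok Rsth Reqe ARth (RZ R)). Qed.

Lemma peval_opp p : peval (popp p) = - peval p.
Proof. exact: (Popp_ok Rsth Reqe ARth (RZ R)). Qed.

Lemma peval_eqb p q : peqb p q -> peval p = peval q.
Proof. by move=> pq; exact: (Peq_ok Rsth Reqe (RZ R) p q pq env). Qed.

Lemma peval_sign n p : peval (psign n p) = (-1) ^+ n * peval p.
Proof.
by rewrite -signr_odd /psign; case: (odd n); rewrite ?peval_opp ?mulN1r ?mul1r.
Qed.

Lemma peval_var k : peval (pvar k) = nth 0 env k.
Proof.
by rewrite -BinList_nth_of_succ_nat; apply/esym/(mkX_ok Rsth Reqe ARth (RZ R)).
Qed.

Lemma peval_psum s : peval (psum s) = \sum_(p <- s) peval p.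
Proof. by elim: s => [|p s IHs]; rewrite ?big_nil ?big_cons ?peval_add ?IHs. Qed.

End PolyEval.

Section BitSequences.
Implicit Types (b : bitseq) (A B : {set 'I_8}).

Definition bits8 (f : nat -> bool) : bitseq := [seq f i | i <- iota 0 8].
Definition setof b : {set 'I_8} := [set i : 'I_8 | nth false b i].

Definition bunion b1 b2 : bitseq := bits8 (fun i => nth false b1 i || nth false b2 i).
Definition bremove b (k : nat) : bitseq := bits8 (fun i => nth false b i && (i != k)).
Definition bsingle (k : nat) : bitseq := bits8 (eq_op^~ k).
Definition bdisjoint b1 b2 : bool :=
  all (fun i => ~~ (nth false b1 i && nth false b2 i)) (iota 0 8).
Definition bcount_below b (k : nat) : nat := count (nth false b) (index_iota 0 k).
Definition binv_count b1 b2 : nat :=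
  sumn [seq (nth false b1 i * bcount_below b2 i)%N | i <- iota 0 8].

Lemma setof_bits8 f : setof (bits8 f) = [set i : 'I_8 | f i].
Proof. by apply/setP => i; rewrite !inE (nth_map 0) ?size_iota // nth_iota. Qed.

Lemma setof_bunion b1 b2 : setof (bunion b1 b2) = setof b1 :|: setof b2.
Proof. by rewrite setof_bits8; apply/setP => i; rewrite !inE. Qed.

Lemma setof_bremove b (j : 'I_8) : setof (bremove b j) = setof b :\ j.
Proof. by rewrite setof_bits8; apply/setP => i; rewrite !inE andbC. Qed.

Lemma setof_bsingle (j : 'I_8) : setof (bsingle j) = [set j].
Proof. by rewrite setof_bits8; apply/setP => i; rewrite !inE. Qed.

Lemma bdisjointE b1 b2 : bdisjoint b1 b2 = [disjoint setof b1 & setof b2].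
Proof.
rewrite disjoint_subset; apply/allP/subsetP => [nb i | sub k].
  by rewrite !inE => b1i; have := nb i; rewrite mem_iota ltn_ord b1i => /(_ isT).
rewrite mem_iota => /andP[_ k8]; have := sub (Ordinal k8); rewrite !inE /=.
by case: (nth false b1 k) => // /(_ isT).
Qed.

Lemma card_setof_below b (j : 'I_8) :
  #|[set i in setof b | (i < j)%N]| = bcount_below b j.
Proof.
rewrite -sum1_card /bcount_below -sum1_count.
rewrite (big_nat_widen _ _ 8) 1?ltnW // big_mkord.
by apply: eq_bigl => i; rewrite !inE.
Qed.

Lemma inv_count_sum A B :
  inv_count A B = (\sum_(i in A) #|[set j in B | (j < i)%N]|)%N.
Proof.
rewrite /inv_count -sum1_card.
under [RHS]eq_bigr => i _ do rewrite -sum1_card.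
by rewrite pair_big_dep; apply: eq_bigl => -[i j]; rewrite !inE.
Qed.

Lemma inv_count_setof b1 b2 : inv_count (setof b1) (setof b2) = binv_count b1 b2.
Proof.
rewrite inv_count_sum /binv_count sumnE big_map -[iota 0 8]/(index_iota 0 8).
rewrite big_mkord big_mkcond; apply: eq_bigr => i _; rewrite inE card_setof_below.
by case: (nth false b1 i); rewrite ?mul1n.
Qed.

End BitSequences.

(* The term (b, p) of a symbolic form stands for p dx^(setof b); keys may
   repeat until [scompress] collects them. *)
Definition sform := seq (bitseq * zpoly).

Definition sopp (l : sform) : sform := [seq (t.1, popp t.2) | t <- l].
Definition sscale (p : zpoly) (l : sform) : sform := [seq (t.1, pmul p t.2) | t <- l].
Definition skeys (l : sform) : seq bitseq := undup [seq t.1 | t <- l].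
Definition scoef (l : sform) (c : bitseq) : zpoly := psum [seq t.2 | t <- l & t.1 == c].
Definition scompress (l : sform) : sform := [seq (c, scoef l c) | c <- skeys l].
Definition seqb (l1 l2 : sform) : bool :=
  all (fun c => peqb (scoef l1 c) (scoef l2 c)) (skeys (l1 ++ l2)).

Definition swedge (l1 l2 : sform) : sform :=
  scompress [seq (bunion s.1 t.1, psign (binv_count s.1 t.1) (pmul s.2 t.2))
            | s <- l1, t <- [seq t <- l2 | bdisjoint s.1 t.1]].

Definition scontr (X : nat -> zpoly) (l : sform) : sform :=
  [seq (bremove t.1 j, psign (bcount_below t.1 j) (pmul (X j) t.2))
  | t <- l, j <- [seq j <- iota 0 8 | nth false t.1 j]].

Definition sflat (X : nat -> zpoly) : sform := [seq (bsingle j, X j) | j <- iota 0 8].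

Definition sdx (j : nat) : sform := [:: (bsingle j, Pc (Zpos 1))].

Definition sdx4 (a b c d : nat) : sform :=
  swedge (sdx a) (swedge (sdx b) (swedge (sdx c) (sdx d))).

Definition sPhi0 : sform :=
  sdx4 0 1 2 3 ++ sopp (sdx4 0 1 6 7) ++ sopp (sdx4 0 5 2 7) ++ sopp (sdx4 0 5 6 3)
  ++ sdx4 0 4 1 5 ++ sdx4 0 4 2 6 ++ sdx4 0 4 3 7 ++ sdx4 4 5 6 7
  ++ sopp (sdx4 4 5 2 3) ++ sopp (sdx4 4 1 6 3) ++ sopp (sdx4 4 1 2 7)
  ++ sdx4 2 6 3 7 ++ sdx4 1 5 3 7 ++ sdx4 1 5 2 6.

Definition sdot (X Y : nat -> zpoly) : zpoly :=
  psum [seq pmul (X j) (Y j) | j <- iota 0 8].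

Section SymbolicEval.
Variables (R : realFieldType) (env : seq R).
Local Notation peval := (peval env).
Implicit Types (l : sform) (v w : 'rV[R]_8) (X Y : nat -> zpoly).

Definition seval l : form R := \sum_(t <- l) peval t.2 *: dxI (setof t.1).

Lemma seval_cat l1 l2 : seval (l1 ++ l2) = seval l1 + seval l2.
Proof. exact: big_cat. Qed.

Lemma seval_opp l : seval (sopp l) = - seval l.
Proof.
by rewrite /seval big_map -sumrN; apply: eq_bigr => t _; rewrite peval_opp scaleNr.
Qed.

Lemma seval_scale p l : seval (sscale p l) = peval p *: seval l.
Proof.
by rewrite /seval big_map scaler_sumr; apply: eq_bigr => t _; rewrite peval_mul scalerA.
Qed.

Lemma seval_coef l cs :
  uniq cs -> {subset [seq t.1 | t <- l] <= cs} ->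
  seval l = \sum_(c <- cs) peval (scoef l c) *: dxI (setof c).
Proof.
move=> cs_uniq l_cs.
have -> : \sum_(c <- cs) peval (scoef l c) *: dxI (setof c)
          = \sum_(c <- cs) \sum_(t <- l | t.1 == c) peval t.2 *: dxI (setof t.1).
  apply: eq_bigr => c _; rewrite peval_psum big_map big_filter scaler_suml.
  by apply: eq_bigr => t /eqP ->.
rewrite /seval (exchange_big_dep xpredT) //.
elim: l l_cs => [|t l IHl] l_cs; rewrite ?big_nil ?big_cons //.
congr (_ + _); last by apply: IHl => c c_l; apply: l_cs; rewrite inE c_l orbT.
rewrite -big_filter (@eq_filter _ _ (pred1 t.1)) => [|c]; last by rewrite /= eq_sym.
by rewrite filter_pred1_uniq ?big_seq1 // l_cs ?inE ?eqxx.
Qed.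

Lemma seval_compress l : seval (scompress l) = seval l.
Proof.
rewrite (@seval_coef l (skeys l)) ?undup_uniq // => [|c]; last by rewrite mem_undup.
by rewrite /seval big_map.
Qed.

Lemma seval_eqb l1 l2 : seqb l1 l2 -> seval l1 = seval l2.
Proof.
move=> /allP eq12; have keys_uniq := undup_uniq [seq t.1 | t <- l1 ++ l2].
rewrite !(@seval_coef _ (skeys (l1 ++ l2))) // => [|c|c];
  rewrite ?mem_undup ?map_cat ?mem_cat.
- by apply: eq_big_seq => c /eq12 /peval_eqb ->.
- by move=> ->; rewrite orbT.
- by move=> ->.
Qed.

Lemma seval_eqb_scale p1 p2 l1 l2 :
  seqb (sscale p1 l1) (sscale p2 l2) -> peval p1 *: seval l1 = peval p2 *: seval l2.
Proof. by move/seval_eqb; rewrite !seval_scale. Qed.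

Lemma seval_swedge l1 l2 : wedge (seval l1) (seval l2) = seval (swedge l1 l2).
Proof.
rewrite seval_compress /seval big_allpairs_dep wedge_suml; apply: eq_bigr => s _.
rewrite wedge_sumr big_filter big_mkcond; apply: eq_bigr => t _.
rewrite wedgeZl wedgeZr wedge_dxI bdisjointE; case: ifP => _; last by rewrite !scaler0.
by rewrite /= peval_sign peval_mul inv_count_setof setof_bunion !scalerA mulrC.
Qed.

Lemma seval_scontr v X :
  (forall j : 'I_8, peval (X j) = v 0 j) ->
  forall l, contr v (seval l) = seval (scontr X l).
Proof.
move=> Xv l; rewrite /seval big_allpairs_dep contr_sum; apply: eq_bigr => t _.
rewrite contrZ contr_dxI scaler_sumr big_filter -[iota 0 8]/(index_iota 0 8) big_mkord.
apply: eq_big => [j|j _]; first by rewrite inE.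
rewrite peval_sign peval_mul Xv setof_bremove card_setof_below !scalerA.
by rewrite mulrC mulrA.
Qed.

Lemma seval_sflat v X :
  (forall j : 'I_8, peval (X j) = v 0 j) -> flat v = seval (sflat X).
Proof.
move=> Xv; rewrite /seval big_map -[iota 0 8]/(index_iota 0 8) big_mkord.
by apply: eq_bigr => j _; rewrite Xv setof_bsingle.
Qed.

Lemma seval_sdx j : (j < 8)%N -> dx R (inord j) = seval (sdx j).
Proof.
move=> j8; rewrite /seval big_seq1 /= scale1r.
by have := setof_bsingle (inord j); rewrite inordK // => ->.
Qed.

Lemma seval_sdx4 (a b c d : nat) :
  (a < 8)%N -> (b < 8)%N -> (c < 8)%N -> (d < 8)%N ->
  dx4 R a b c d = seval (sdx4 a b c d).
Proof. by move=> a8 b8 c8 d8; rewrite /dx4 !seval_sdx // !seval_swedge. Qed.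

Lemma seval_sPhi0 : Phi0 R = seval sPhi0.
Proof. by rewrite /Phi0 !seval_sdx4 // !seval_cat !seval_opp !addrA. Qed.

Lemma peval_sdot v w X Y :
  (forall j : 'I_8, peval (X j) = v 0 j) -> (forall j : 'I_8, peval (Y j) = w 0 j) ->
  peval (sdot X Y) = dot v w.
Proof.
move=> Xv Yw; rewrite peval_psum big_map -[iota 0 8]/(index_iota 0 8) big_mkord.
by apply: eq_bigr => j _; rewrite peval_mul Xv Yw.
Qed.

End SymbolicEval.

Definition pv (j : nat) : zpoly := pvar j.
Definition pw (j : nat) : zpoly := pvar (8 + j).

Definition swedge_norm2 : zpoly :=
  padd (pmul (sdot pv pv) (sdot pw pw)) (popp (pmul (sdot pv pw) (sdot pv pw))).

Definition sPhit : sform :=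
  sPhi0 ++ swedge (sflat pv) (scontr pw sPhi0)
        ++ sopp (swedge (sflat pw) (scontr pv sPhi0)).

Definition sfactor : zpoly := padd (Pc 7) (pmul (Pc 4) swedge_norm2).

Lemma sPhit_square_eqb :
  seqb (sscale (Pc 7) (swedge sPhit sPhit)) (sscale sfactor (swedge sPhi0 sPhi0)).
Proof. by vm_compute. Qed.

Section Coordinates.
Variables (R : realFieldType) (v w : 'rV[R]_8).

Definition coords : seq R := map (v 0) (enum 'I_8) ++ map (w 0) (enum 'I_8).

Lemma peval_pv (j : 'I_8) : peval coords (pv j) = v 0 j.
Proof.
rewrite peval_var nth_cat size_map size_enum_ord ltn_ord.
by rewrite (nth_map j) ?size_enum_ord // nth_ord_enum.
Qed.

Lemma peval_pw (j : 'I_8) : peval coords (pw j) = w 0 j.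
Proof.
rewrite peval_var nth_cat size_map size_enum_ord ltnNge leq_addr addKn /=.
by rewrite (nth_map j) ?size_enum_ord // nth_ord_enum.
Qed.

Lemma seval_sPhit :
  Phi0 R + (wedge (flat v) (contr w (Phi0 R)) - wedge (flat w) (contr v (Phi0 R)))
  = seval coords sPhit.
Proof.
rewrite /sPhit (seval_sPhi0 coords) (seval_sflat peval_pv) (seval_sflat peval_pw).
by rewrite (seval_scontr peval_pv) (seval_scontr peval_pw) !seval_swedge -seval_opp -!seval_cat.
Qed.

Lemma peval_sfactor : peval coords sfactor = 7%:R + 4%:R * wedge_norm2 v w.
Proof.
rewrite peval_add peval_mul peval_add peval_opp 2!peval_mul.
rewrite (peval_sdot peval_pv peval_pw) (peval_sdot peval_pv peval_pv).
by rewrite (peval_sdot peval_pw peval_pw).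
Qed.

End Coordinates.

Theorem mainTheorem18 (R : realFieldType) (v w : 'rV[R]_8) :
  let sigma7 :=
    wedge (flat v) (contr w (Phi0 R)) - wedge (flat w) (contr v (Phi0 R)) in
  let Phit := Phi0 R + sigma7 in
  wedge Phit Phit = (1 + 4 / 7 * wedge_norm2 v w) *: wedge (Phi0 R) (Phi0 R).
Proof.
move=> sigma7 Phit.
have key : 7%:R *: wedge Phit Phit
            = (7%:R + 4%:R * wedge_norm2 v w) *: wedge (Phi0 R) (Phi0 R).
  rewrite /Phit /sigma7 seval_sPhit (seval_sPhi0 (coords v w)) !seval_swedge.
  rewrite -peval_sfactor.
  exact: seval_eqb_scale _ sPhit_square_eqb.
apply: (@scalerI _ _ 7%:R); first by rewrite pnatr_eq0.
by rewrite key scalerA; congr (_ *: _); field.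
Qed.
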